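(* Let $H$ be a separable complex Hilbert space and $X$ a locally compact space with positive Borel measure $\mu$. Fix $f_{10}\in\overline{F}_0$ and let $F_1=\{Af_{10}:A\in\operatorname{GL}(H)\}$. The map $\theta:F_1\to\operatorname{GL}(H)$, $\theta(f)=\pi_1(\zeta^{-1}(f))$, is a bijection.
   Context: A frame on $H$ is a map $f:X\to H$ such that $x\mapsto\langle\phi,f(x)\rangle$ is measurable for every $\phi\in H$ and there exist $0<A\le B$ with $A\|\phi\|^2\le\int_X|\langle\phi,f(x)\rangle|^2d\mu(x)\le B\|\phi\|^2$ for all $\phi$; it is Parseval if $A=B=1$. $\operatorname{GL}(H)$ is the group of bounded invertible operators with bounded inverse, $U(H)$ the unitary group. $F$ is the set of frames $f$ with $\sup_x\|f(x)\|_H<\infty$, $F_0$ the Parseval ones. $(Af)(x)=A[f(x)]$. $\overline{F}_0\subset F_0$ is a fixed transversal of $F_0/U(H)$ (exactly one element from each orbit $\{Vf:V\in U(H)\}$). The map $\zeta:\operatorname{GL}(H)\times\overline{F}_0\to F$, $\zeta(A,f)=Af$, is a bijection; $\pi_1$ is projection onto the $\operatorname{GL}(H)$ factor. *)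

From HB Require Import structures.
From mathcomp Require Import all_boot all_order all_algebra.
From mathcomp Require Import complex.
From mathcomp Require Import all_classical all_reals all_analysis.
Set Implicit Arguments. Unset Strict Implicit. Unset Printing Implicit Defensive.
Import Order.TTheory GRing.Theory Num.Theory.
Local Open Scope ring_scope.
Local Open Scope classical_set_scope.

Record is_sep_hilbert (R : realType) (H : lmodType R[i]) (ip : H -> H -> R[i]) :
  Prop := {
  ip_linear : forall (a : R[i]) (x y z : H), ip (a *: x + y) z = a * ip x z + ip y z;
  ip_conj : forall x y : H, ip x y = (ip y x)^*;
  ip_ge0 : forall x : H, 0 <= ip x x;
  ip_def : forall x : H, ip x x = 0 -> x = 0;
  ip_complete : forall u : nat -> H,
     (forall e : R, 0 < e -> exists N, forall m n, (N <= m)%N -> (N <= n)%N ->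
        Num.sqrt (complex.Re (ip (u m - u n) (u m - u n))) < e) ->
     exists l : H, forall e : R, 0 < e -> exists N, forall n, (N <= n)%N ->
        Num.sqrt (complex.Re (ip (u n - l) (u n - l))) < e;
  ip_separable : exists d : nat -> H, forall (x : H) (e : R), 0 < e ->
     exists n, Num.sqrt (complex.Re (ip (x - d n) (x - d n))) < e }.

Section Frames.
Variables (R : realType) (H : lmodType R[i]) (ip : H -> H -> R[i]).

Definition hnorm (x : H) : R := Num.sqrt (complex.Re (ip x x)).

Definition abs2 (z : R[i]) : R := (complex.Re z) ^+ 2 + (complex.Im z) ^+ 2.

Definition is_linear_op (A : H -> H) : Prop :=
  forall (a : R[i]) (x y : H), A (a *: x + y) = a *: A x + A y.

Definition is_bounded_op (A : H -> H) : Prop :=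
  is_linear_op A /\ exists M : R, forall x, hnorm (A x) <= M * hnorm x.

Definition GLH : set (H -> H) :=
  [set A | is_bounded_op A /\
     exists B : H -> H, [/\ is_bounded_op B, cancel A B & cancel B A]].

Definition Unitary : set (H -> H) :=
  [set U | GLH U /\ forall x y, ip (U x) (U y) = ip x y].

Variables (X : ptopologicalType)
  (mu : {measure set (g_sigma_algebraType (@open X)) -> \bar R}).

Local Notation XB := (g_sigma_algebraType (@open X)).

Definition weakly_measurable (f : X -> H) : Prop :=
  forall phi : H,
    measurable_fun [set: XB] (fun x : XB => complex.Re (ip phi (f x))) /\
    measurable_fun [set: XB] (fun x : XB => complex.Im (ip phi (f x))).

Definition frame_integral (f : X -> H) (phi : H) : \bar R :=
  (\int[mu]_(x in [set: XB]) (abs2 (ip phi (f x)))%:E)%E.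

Definition is_frame (f : X -> H) : Prop :=
  weakly_measurable f /\
  exists A B : R, [/\ 0 < A, A <= B &
    forall phi : H, ((A * hnorm phi ^+ 2)%:E <= frame_integral f phi)%E
                    /\ (frame_integral f phi <= (B * hnorm phi ^+ 2)%:E)%E].

Definition is_parseval (f : X -> H) : Prop :=
  weakly_measurable f /\
  forall phi : H, frame_integral f phi = (hnorm phi ^+ 2)%:E.

Definition Fr : set (X -> H) :=
  [set f | is_frame f /\ exists M : R, forall x, hnorm (f x) <= M].

Definition Fr0 : set (X -> H) := [set f | Fr f /\ is_parseval f].

Definition opf (A : H -> H) (f : X -> H) : X -> H := fun x => A (f x).

Definition orbitU (f : X -> H) : set (X -> H) := [set opf V f | V in Unitary].

Definition is_Utransversal (Fbar : set (X -> H)) : Prop :=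
  Fbar `<=` Fr0 /\
  forall f, Fr0 f -> exists! g, Fbar g /\ orbitU f g.

Definition zeta (p : (H -> H) * (X -> H)) : X -> H := opf p.1 p.2.

(** a chosen preimage under zeta (the preimage, when zeta is bijective) *)
Definition zeta_inv (Fbar : set (X -> H)) (f : X -> H) : (H -> H) * (X -> H) :=
  match pselect (exists p, (GLH `*` Fbar) p /\ zeta p = f) with
  | left h => projT1 (cid h)
  | right _ => (id, f)
  end.

Definition theta (Fbar : set (X -> H)) (f : X -> H) : H -> H := (zeta_inv Fbar f).1.

End Frames.

From HB Require Import structures.
From mathcomp Require Import all_boot all_order all_algebra.
From mathcomp Require Import complex.
From mathcomp Require Import all_classical all_reals all_analysis.
Import Order.TTheory GRing.Theory Num.Theory.
Local Open Scope ring_scope.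
Local Open Scope classical_set_scope.

(* Since zeta is injective on GL(H) x Fbar, the chosen preimage of A f10 is
   (A, f10) itself, so theta undoes A |-> A f10; a left inverse of a map is a
   bijection from the image back onto the domain. *)

Lemma set_bij_image_cancel (T U : Type) (D : set T) (h : T -> U) (g : U -> T) :
  (forall a, D a -> g (h a) = a) -> set_bij (h @` D) D g.
Proof.
move=> hK; split.
- by move=> _ [a Da <-]; rewrite hK.
- move=> x y; rewrite !inE => -[a Da <-] [b Db <-].
  by rewrite !hK // => ->.
- by move=> a Da; exists (h a); [exists a | rewrite hK].
Qed.

Section ThetaInverse.
Variables (R : realType) (H : lmodType R[i]) (ip : H -> H -> R[i]).
Variables (X : ptopologicalType) (Fbar : set (X -> H)).
Hypothesis zeta_inj : set_inj (GLH ip `*` Fbar) (@zeta R H X).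

Lemma zeta_invK p : (GLH ip `*` Fbar) p -> zeta_inv ip Fbar (zeta p) = p.
Proof.
move=> Dp; rewrite /zeta_inv; case: pselect => [ex | nex]; last first.
  by exfalso; apply: nex; exists p.
case: (cid ex) => q [Dq zq] /=.
by apply: zeta_inj; rewrite ?inE.
Qed.

Lemma theta_opf A f : GLH ip A -> Fbar f -> theta ip Fbar (opf A f) = A.
Proof. by move=> hA hf; rewrite /theta -[opf A f]/(zeta (A, f)) zeta_invK. Qed.

End ThetaInverse.

Theorem mainTheorem15
  (R : realType) (H : lmodType R[i]) (ip : H -> H -> R[i])
  (hH : is_sep_hilbert ip)
  (X : ptopologicalType) (hX : locally_compact [set: X])
  (mu : {measure set (g_sigma_algebraType (@open X)) -> \bar R})
  (Fbar : set (X -> H)) (hFbar : is_Utransversal ip mu Fbar)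
  (hzeta : set_bij (GLH ip `*` Fbar) (Fr ip mu) (@zeta R H X))
  (f10 : X -> H) (hf10 : Fbar f10) :
  set_bij [set opf A f10 | A in GLH ip] (GLH ip) (theta ip Fbar).
Proof.
case: hzeta => _ zeta_inj _.
apply: set_bij_image_cancel => A hA.
exact: theta_opf.
Qed.
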